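(* Let $(X,d,\preccurlyeq)$ be a preordered $s$-regular $b$-metric space. Let $T,S:X\to X$ be self mappings and suppose there exists $x_0\in X$ such that $T(x_0)\preccurlyeq S(x_0)$. Suppose that: (i) $T$ is isotone; (ii) $S$ covers $T$ on the set $O_X(x_0)$; (iii) every chain $C\in\mathcal{C}(x_0,T,S,\preccurlyeq)$ has a lower bound $w\in X$ (i.e. $w\preccurlyeq x$ for all $x\in C$) satisfying $w\preccurlyeq T(w)$, and there exists $z\in X$ such that $S^i(z)\preccurlyeq S(w)\preccurlyeq T(w)$ for all $i\in\mathbb{N}$ and $d(T^i(w),S^i(z))\to 0$ as $i\to\infty$. Then the set $\mathrm{Coin}(T,S)\cap O_X(x_0)$ is nonempty and contains a minimal element.
   Context: A $b$-metric space with coefficient $s\ge 1$ is a nonempty set $X$ with a function $d:X\times X\to[0,\infty)$ such that for all $x,y,z\in X$: $d(x,y)=0$ iff $x=y$; $d(x,y)=d(y,x)$; $d(x,y)\le s[d(x,z)+d(z,y)]$. A preorder is a reflexive and transitive binary relation $\preccurlyeq$; $x\succcurlyeq y$ means $y\preccurlyeq x$, and $x\prec y$ means $x\preccurlyeq y$ and $x\ne y$. A preordered $s$-regular $b$-metric space $(X,d,\preccurlyeq)$ is a $b$-metric space with coefficient $s\ge1$ equipped with a preorder $\preccurlyeq$ such that for all $x,y,z\in X$, $x\preccurlyeq y\preccurlyeq z$ implies $\max\{d(x,y),d(y,z)\}\le s^2 d(x,z)$. A chain is a subset of $X$ any two elements of which are comparable under $\preccurlyeq$. A map $T:X\to X$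 is isotone if $x\preccurlyeq y$ implies $T(x)\preccurlyeq T(y)$. $T^i$ denotes the $i$-th iterate of $T$. For $x_0\in X$, $O_X(x_0)=\{x\in X: x\preccurlyeq x_0\}$. $\mathrm{Coin}(T,S)=\{x\in X: T(x)=S(x)\}$. A map $S$ covers a map $T$ on a set $A\subset X$ if for every $x\in A$ with $T(x)\preccurlyeq S(x)$ there exists $y\in X$ with $y\preccurlyeq x$ and $S(y)=T(x)$. $\mathcal{C}(T,S,\preccurlyeq)$ is the set of chains $C\subset X$ such that for all $x,y\in C$: $T(x)\preccurlyeq S(x)$; $x\prec y$ implies $S(x)\preccurlyeq T(y)$; and $S(C)\subset T(X)$. $\mathcal{C}(x_0,T,S,\preccurlyeq)=\{C\in\mathcal{C}(T,S,\preccurlyeq): C\subset O_X(x_0)\text{ and } S(C)\subset T(O_X(x_0))\}$. A minimal element of a set $A\subset X$ is an element $w\in A$ such that there is no $u\in A$ with $u\prec w$. *)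

From Stdlib Require Export Reals.
Open Scope R_scope.

Section Defs.
Context {X : Type}.

Definition is_b_metric (d : X -> X -> R) (s : R) : Prop :=
  1 <= s /\
  (forall x y, 0 <= d x y) /\
  (forall x y, d x y = 0 <-> x = y) /\
  (forall x y, d x y = d y x) /\
  (forall x y z, d x y <= s * (d x z + d z y)).

Definition is_preorder (le : X -> X -> Prop) : Prop :=
  (forall x, le x x) /\ (forall x y z, le x y -> le y z -> le x z).

Definition plt (le : X -> X -> Prop) (x y : X) : Prop := le x y /\ x <> y.

(* preordered s-regular b-metric space (X nonempty is guaranteed by x0 below) *)
Definition preordered_s_regular_bmetric (d : X -> X -> R) (s : R)
  (le : X -> X -> Prop) : Prop :=
  is_b_metric d s /\ is_preorder le /\
  (forall x y z, le x y -> le y z -> Rmax (d x y) (d y z) <= s ^ 2 * d x z).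

Definition is_chain (le : X -> X -> Prop) (C : X -> Prop) : Prop :=
  forall x y, C x -> C y -> le x y \/ le y x.

Definition isotone (le : X -> X -> Prop) (T : X -> X) : Prop :=
  forall x y, le x y -> le (T x) (T y).

Definition O_X (le : X -> X -> Prop) (x0 : X) : X -> Prop := fun x => le x x0.

Definition Coin (T S : X -> X) : X -> Prop := fun x => T x = S x.

Definition covers_on (le : X -> X -> Prop) (S T : X -> X) (A : X -> Prop) : Prop :=
  forall x, A x -> le (T x) (S x) -> exists y, le y x /\ S y = T x.

Definition in_CTS (le : X -> X -> Prop) (T S : X -> X) (C : X -> Prop) : Prop :=
  is_chain le C /\
  (forall x, C x -> le (T x) (S x)) /\
  (forall x y, C x -> C y -> plt le x y -> le (S x) (T y)) /\
  (forall x, C x -> exists u, S x = T u).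

Definition in_Cx0TS (le : X -> X -> Prop) (x0 : X) (T S : X -> X)
  (C : X -> Prop) : Prop :=
  in_CTS le T S C /\
  (forall x, C x -> O_X le x0 x) /\
  (forall x, C x -> exists u, O_X le x0 u /\ S x = T u).

Definition is_minimal (le : X -> X -> Prop) (A : X -> Prop) (w : X) : Prop :=
  A w /\ ~ (exists u, A u /\ plt le u w).

End Defs.

Definition iter {X : Type} (i : nat) (T : X -> X) (x : X) : X := Nat.iter i T x.

(** The coincidence points of [T] and [S] below [x0] are ordered by an
    antisymmetric relation, since regularity gives [d x y <= s^2 d x x = 0]
    whenever [x <= y <= x].  A chain of coincidence points below [x0] belongs
    to [C(x0,T,S,<=)], so hypothesis (iii) yields a lower bound [w] with
    [w <= T w]; iterating the isotone map [T] gives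
    [S^i z <= S w <= T w <= T^i w], and regularity (applied twice) bounds
    [d (S w) (T w)] by [s^4 d (T^i w) (S^i z)], which tends to [0].  Hence [w]
    is again a coincidence point, and Zorn's lemma produces a minimal one.
    The singleton chain [{y}], where [S y = T x0] with [y <= x0] is provided
    by the covering hypothesis, shows that there is a coincidence point at
    all. *)

From Stdlib Require Import Reals Lra Classical.
From mathcomp Require boolp classical_sets.
Open Scope R_scope.

Lemma Zorn_minimal (Y : Type) (le : Y -> Y -> Prop) (A : Y -> Prop) :
  is_preorder le -> (forall x y, le x y -> le y x -> x = y) ->
  (exists a, A a) ->
  (forall C, (forall x, C x -> A x) -> (exists x, C x) -> is_chain le C ->
     exists w, A w /\ forall x, C x -> le w x) ->
  exists w, is_minimal le A w.
Proof.
intros [le_refl le_trans] le_anti [a Aa] chain_lb.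
(* Zorn's lemma for the reversed order on the subtype [{x | A x}]; it also
   asks for a bound of the empty chain, which is where [A] nonempty is used. *)
set (R := fun p q : {x | A x} => boolp.asbool (le (proj1_sig q) (proj1_sig p))).
assert (RP : forall p q, R p q = true <-> le (proj1_sig q) (proj1_sig p)).
{ intros p q; split; intro H.
  - exact (ssrbool.elimT (boolp.asboolP _) H).
  - exact (ssrbool.introT (boolp.asboolP _) H). }
destruct (@classical_sets.Zorn {x | A x} R) as [[w Aw] w_max].
- intro p; apply RP, le_refl.
- intros p q r Hpq Hqr; apply RP; apply RP in Hpq; apply RP in Hqr; eauto.
- intros [p Ap] [q Aq] Hpq Hqp; apply RP in Hpq; apply RP in Hqp; simpl in *.
  destruct (le_anti p q Hqp Hpq); f_equal; apply proof_irrelevance.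
- intros B B_chain.
  destruct (classic (exists p, B p)) as [[p Bp] | B_empty].
  + destruct (chain_lb (fun x => exists p, B p /\ proj1_sig p = x))
      as [w [Aw w_lb]].
    * intros x [q [_ <-]]; exact (proj2_sig q).
    * exists (proj1_sig p); eauto.
    * intros x y [q [Bq <-]] [r [Br <-]].
      destruct (B_chain q r Bq Br) as [H | H]; apply RP in H; auto.
    * exists (exist _ w Aw); intros q Bq; apply RP, w_lb; eauto.
  + exists (exist _ a Aa); intros p Bp; exfalso; eauto.
- exists w; split; [exact Aw |].
  intros [u [Au [Huw Hne]]]; apply Hne.
  apply (f_equal (@proj1_sig _ _)
           (w_max (exist _ u Au) (proj2 (RP (exist _ w Aw) (exist _ u Au)) Huw))).
Qed.

Lemma Un_cv_const (a : R) : Un_cv (fun _ => a) a.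
Proof.
intros e e_pos; exists 0%nat; intros n _.
unfold R_dist; rewrite Rminus_diag, Rabs_R0; exact e_pos.
Qed.

Lemma le0_of_le_vanishing (a K : R) (u : nat -> R) :
  (forall i, a <= K * u (i + 1)%nat) -> Un_cv u 0 -> a <= 0.
Proof.
intros a_le u_cv.
apply (@Rle_cv_lim (fun _ => a) (fun i => K * u (i + 1)%nat) a 0); [exact a_le | apply Un_cv_const |].
rewrite <- (Rmult_0_r K).
apply CV_mult; [apply Un_cv_const | exact (CV_shift' u 1 0 u_cv)].
Qed.

Lemma le_iter_of_le_image {X : Type} {le : X -> X -> Prop} {T : X -> X} {w : X} :
  is_preorder le -> isotone le T -> le w (T w) -> forall i, le w (iter i T w).
Proof.
intros [le_refl le_trans] T_iso w_le i; induction i as [| i IH].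
- apply le_refl.
- exact (le_trans _ _ _ w_le (T_iso _ _ IH)).
Qed.

Section Chains.

Context {X : Type} {le : X -> X -> Prop} {T S : X -> X} {x0 : X}.
Hypotheses (le_pre : is_preorder le) (T_iso : isotone le T).

Lemma singleton_in_Cx0TS {y : X} :
  le y x0 -> S y = T x0 -> in_Cx0TS le x0 T S (fun x => x = y).
Proof.
destruct le_pre as [le_refl _].
intros y_le Sy; repeat split.
- intros a b -> ->; left; apply le_refl.
- intros a ->; rewrite Sy; exact (T_iso _ _ y_le).
- intros a b -> -> [_ Hne]; congruence.
- intros a ->; exists x0; exact Sy.
- intros a ->; exact y_le.
- intros a ->; exists x0; split; [apply le_refl | exact Sy].
Qed.

Lemma coin_chain_in_Cx0TS {C : X -> Prop} :
  (forall x, C x -> Coin T S x /\ O_X le x0 x) -> is_chain le C ->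
  in_Cx0TS le x0 T S C.
Proof.
destruct le_pre as [le_refl _].
intros C_coin C_chain; repeat split.
- exact C_chain.
- intros a Ca; rewrite (proj1 (C_coin a Ca)); apply le_refl.
- intros a b Ca Cb [Hab _]; rewrite <- (proj1 (C_coin a Ca)); exact (T_iso _ _ Hab).
- intros a Ca; exists a; symmetry; exact (proj1 (C_coin a Ca)).
- intros a Ca; exact (proj2 (C_coin a Ca)).
- intros a Ca; exists a; split; [exact (proj2 (C_coin a Ca)) | symmetry; exact (proj1 (C_coin a Ca))].
Qed.

End Chains.

Section RegularBMetric.

Context {X : Type} {d : X -> X -> R} {s : R} {le : X -> X -> Prop}.
Hypothesis space : preordered_s_regular_bmetric d s le.

Lemma regular_antisym (x y : X) : le x y -> le y x -> x = y.
Proof.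
destruct space as [[_ [d_ge0 [d_eq0 _]]] [_ regular]].
intros Hxy Hyx; apply d_eq0.
assert (dxx : d x x = 0) by (apply d_eq0; reflexivity).
pose proof (Rle_trans _ _ _ (Rmax_l _ _) (regular _ _ _ Hxy Hyx)) as H.
rewrite dxx in H; pose proof (d_ge0 x y); lra.
Qed.

Lemma regular_dist_inner (u p q r : X) :
  le u p -> le p q -> le q r -> d p q <= s ^ 4 * d u r.
Proof.
destruct space as [[s_ge1 _] [[_ le_trans] regular]].
intros Hup Hpq Hqr.
assert (Hpr : le p r) by eauto.
assert (dpq : d p q <= s ^ 2 * d p r)
  by exact (Rle_trans _ _ _ (Rmax_l _ _) (regular _ _ _ Hpq Hqr)).
assert (dpr : d p r <= s ^ 2 * d u r)
  by exact (Rle_trans _ _ _ (Rmax_r _ _) (regular _ _ _ Hup Hpr)).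
assert (s2_ge0 : 0 <= s ^ 2) by (apply pow_le; lra).
replace (s ^ 4) with (s ^ 2 * s ^ 2) by ring; rewrite Rmult_assoc.
exact (Rle_trans _ _ _ dpq (Rmult_le_compat_l _ _ _ s2_ge0 dpr)).
Qed.

Lemma coin_of_vanishing_iterates {T S : X -> X} {w z : X} :
  isotone le T -> le w (T w) ->
  (forall i, le (iter i S z) (S w)) -> le (S w) (T w) ->
  Un_cv (fun i => d (iter i T w) (iter i S z)) 0 -> T w = S w.
Proof.
destruct space as [[_ [d_ge0 [d_eq0 [d_sym _]]]] [le_pre _]].
intros T_iso w_le Sz_le Sw_le dist_cv.
apply d_eq0; rewrite d_sym; apply Rle_antisym; [| apply d_ge0].
refine (le0_of_le_vanishing _ (s ^ 4) _ _ dist_cv); intro i; cbv beta.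
rewrite (d_sym (iter _ T w)), Nat.add_1_r.
apply regular_dist_inner; [apply Sz_le | exact Sw_le |].
exact (T_iso _ _ (le_iter_of_le_image le_pre T_iso w_le i)).
Qed.

End RegularBMetric.

Theorem theorem2p1 (X : Type) (d : X -> X -> R) (s : R) (le : X -> X -> Prop)
  (T S : X -> X) (x0 : X) :
  preordered_s_regular_bmetric d s le ->
  le (T x0) (S x0) ->
  isotone le T ->
  covers_on le S T (O_X le x0) ->
  (forall C : X -> Prop, in_Cx0TS le x0 T S C ->
     exists w : X,
       (forall x, C x -> le w x) /\ le w (T w) /\
       exists z : X,
         (forall i : nat, le (iter i S z) (S w) /\ le (S w) (T w)) /\
         Un_cv (fun i => d (iter i T w) (iter i S z)) 0) ->
  (exists x, Coin T S x /\ O_X le x0 x) /\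
  (exists w, is_minimal le (fun x => Coin T S x /\ O_X le x0 x) w).
Proof.
intros space Tx0_le T_iso covers chain_lb.
pose proof space as [_ [le_pre _]]; pose proof le_pre as [le_refl le_trans].
assert (coin_lb : forall C, in_Cx0TS le x0 T S C -> (exists c, C c) ->
          exists w, (Coin T S w /\ O_X le x0 w) /\ forall x, C x -> le w x).
{ intros C HC [c Cc].
  destruct (chain_lb C HC) as [w [w_lb [w_le [z [Hz dist_cv]]]]].
  exists w; split; [split | exact w_lb].
  - exact (coin_of_vanishing_iterates space T_iso w_le
             (fun i => proj1 (Hz i)) (proj2 (Hz 0%nat)) dist_cv).
  - exact (le_trans _ _ _ (w_lb c Cc) (proj1 (proj2 HC) c Cc)). }
assert (coin_ex : exists x, Coin T S x /\ O_X le x0 x).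
{ destruct (covers x0 (le_refl x0) Tx0_le) as [y [y_le Sy]].
  destruct (coin_lb _ (singleton_in_Cx0TS le_pre T_iso y_le Sy)) as [w [Hw _]].
  - exists y; reflexivity.
  - exists w; exact Hw. }
split; [exact coin_ex |].
apply Zorn_minimal; [exact le_pre | exact (regular_antisym space) | exact coin_ex |].
intros C C_coin C_ne C_chain.
exact (coin_lb C (coin_chain_in_Cx0TS le_pre T_iso C_coin C_chain) C_ne).
Qed.
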